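(* Let $K$ be a global function field, fix a prime $\infty$ of $K$, let $\mathcal{O}$ be the ring of elements of $K$ regular at every prime other than $\infty$, and let $\mathbb{F}_q$ be the full constant field of $K$ (so $\mathcal{O}^*=\mathbb{F}_q^*$). Let $\phi\in\mathcal{O}[X]$ be a polynomial of degree $d\geqslant2$ with leading coefficient in $\mathcal{O}^*$. If $\mathrm{Per}(\phi,K)$ contains at least two fixed points and a cycle of length greater than $1$, then $\mathcal{P}=\mathrm{Per}(\phi,K)$ satisfies: $\phi(\mathcal{P})\subseteq\mathcal{P}$, and the differences $y-x$, with $(x,y)$ ranging over pairs of distinct elements of $\mathcal{P}$, are all equal up to multiplication by elements of $\mathbb{F}_q^*$.
   Context: A global function field is a finite extension of $\mathbb{F}_p(t)$; its full constant field is the algebraic closure of $\mathbb{F}_p$ in $K$. $\phi$ is viewed as a map $K\to K$; $\mathrm{Per}(\phi,K)$ is the set of $x\in K$ with $\phi^n(x)=x$ for some $n\geqslant1$; a cycle is the forward orbit of a periodic point and its length is its cardinality. *)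

From HB Require Import structures.
From mathcomp Require Import all_boot all_order all_algebra.
Set Implicit Arguments. Unset Strict Implicit. Unset Printing Implicit Defensive.
Import Order.TTheory GRing.Theory Num.Theory.
Local Open Scope ring_scope.

(* A polynomial whose coefficients lie in the prime subfield (images of nat). *)
Definition prime_coef_poly (K : fieldType) (f : {poly K}) : Prop :=
  forall i : nat, exists n : nat, f`_i = n%:R.

Definition algebraic_over_prime (K : fieldType) (x : K) : Prop :=
  exists f : {poly K}, [/\ prime_coef_poly f, f != 0 & root f x].

Definition in_prime_rat_field (K : fieldType) (t y : K) : Prop :=
  exists a b : {poly K},
    [/\ prime_coef_poly a, prime_coef_poly b, b.[t] != 0 & y = a.[t] / b.[t]].

(* K is a global function field: char p > 0 and K is a finite extension of
   F_p(t) for some t transcendental over F_p. *)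
Definition global_function_field (K : fieldType) : Prop :=
  (exists p : nat, p \in [pchar K]) /\
  exists t : K, ~ algebraic_over_prime t /\
    exists s : seq K, forall x : K,
      exists c : 'I_(size s) -> K,
        (forall i, in_prime_rat_field t (c i)) /\
        x = \sum_(i < size s) c i * s`_i.

(* A prime (place) of K, given by its valuation ring: a proper subring V of K
   such that for every nonzero x, x \in V or x^-1 \in V. *)
Definition is_place (K : fieldType) (V : K -> Prop) : Prop :=
  V 1 /\
  (forall x y, V x -> V y -> V (x + y)) /\
  (forall x, V x -> V (- x)) /\
  (forall x y, V x -> V y -> V (x * y)) /\
  (exists x, ~ V x) /\
  (forall x, x != 0 -> V x \/ V x^-1).

Definition regular_away (K : fieldType) (Vinf : K -> Prop) (x : K) : Prop :=
  forall V : K -> Prop, is_place V -> ~ (forall y, V y <-> Vinf y) -> V x.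

Definition regular_away_unit (K : fieldType) (Vinf : K -> Prop) (x : K) : Prop :=
  x != 0 /\ regular_away Vinf x /\ regular_away Vinf x^-1.

(* Nonzero elements of the full constant field F_q (algebraic closure of F_p in K). *)
Definition const_unit (K : fieldType) (u : K) : Prop :=
  u != 0 /\ algebraic_over_prime u.

Definition periodic (K : fieldType) (phi : {poly K}) (x : K) : Prop :=
  exists n : nat, (0 < n)%N /\ iter n (fun z => phi.[z]) x = x.

(* Outside a valuation ring V that contains the coefficients of phi and the
   inverse of its leading coefficient, y |-> phi(y) strictly increases the
   absolute value, so an orbit leaving V never returns: periodic points are
   regular away from infinity.  For periodic x != y the multiplier
   (phi y - phi x) / (y - x) is then regular, and so is its inverse, because
   the difference comes back to y - x after a common period.  A unit u of
   that ring is a constant: otherwise Chevalley's extension theorem gives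
   places where u, resp. u^-1, lies in the maximal ideal, and one of them is
   not infinity.  Finally, let a != b be fixed and c periodic but not fixed.
   For a fixed point e and a non-fixed periodic x, the multipliers of (a, x)
   and (e, x) determine (x - a) / (e - a) rationally, so it is constant;
   taking e = b, or passing through c when x is fixed, every
   (x - a) / (b - a) is constant, and (y - x) / (y' - x') is a quotient of
   differences of such constants. *)

From HB Require Import structures.
From mathcomp Require Import all_boot all_order all_algebra finfield.
From mathcomp Require Import zify ring.
From mathcomp Require Import classical_sets.
From Stdlib Require Import Classical.
Set Implicit Arguments. Unset Strict Implicit. Unset Printing Implicit Defensive.
Import GRing.Theory.
Local Open Scope ring_scope.

Section Subring.
Variable R : comNzRingType.
Implicit Types x y : R.

Definition is_subring S := [/\ S 1, (forall x y, S x -> S y -> S (x + y)),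
  (forall x, S x -> S (- x)) & (forall x y, S x -> S y -> S (x * y))].

Variables (S : R -> Prop) (subS : is_subring S).

Lemma subring1 : S 1. Proof. by case: subS. Qed.
Lemma subringD x y : S x -> S y -> S (x + y). Proof. by case: subS => _ + _ _; apply. Qed.
Lemma subringN x : S x -> S (- x). Proof. by case: subS => _ _ + _; apply. Qed.
Lemma subringM x y : S x -> S y -> S (x * y). Proof. by case: subS => _ _ _; apply. Qed.
Lemma subringB x y : S x -> S y -> S (x - y).
Proof. by move=> Sx /subringN; apply: subringD. Qed.
Lemma subring0 : S 0. Proof. by rewrite -(subrr 1); apply: subringB; apply: subring1. Qed.

Lemma subringX x n : S x -> S (x ^+ n).
Proof.
by move=> Sx; elim: n => [|n IHn]; rewrite ?expr0 ?exprS; [apply: subring1 | apply: subringM].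
Qed.

Lemma subring_sum (I : Type) (r : seq I) (P : pred I) (F : I -> R) :
  (forall i, P i -> S (F i)) -> S (\sum_(i <- r | P i) F i).
Proof. by move=> SF; apply: (big_ind S) => //; [apply: subring0 | apply: subringD]. Qed.

Lemma subring_horner (p : {poly R}) x : (forall i, S p`_i) -> S x -> S p.[x].
Proof.
move=> Sp Sx; rewrite horner_coef; apply: subring_sum => i _.
by apply: subringM => //; apply: subringX.
Qed.

Lemma horner_subr_factor (p : {poly R}) x y : (forall i, S p`_i) -> S x -> S y ->
  exists2 D, S D & p.[y] - p.[x] = (y - x) * D.
Proof.
move=> Sp Sx Sy; exists (\sum_(i < size p) p`_i * \sum_(j < i) y ^+ (i.-1 - j) * x ^+ j).
  apply: subring_sum => i _; apply: subringM => //; apply: subring_sum => j _.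
  by apply: subringM; apply: subringX.
rewrite !horner_coef -sumrB mulr_sumr; apply: eq_bigr => i _.
by rewrite -mulrBr subrXX mulrCA.
Qed.

End Subring.

Lemma place_subring (K : fieldType) (V : K -> Prop) : is_place V -> is_subring V.
Proof. by case=> V1 [VD [VN [VM _]]]; split. Qed.

Lemma regular_away_subring (K : fieldType) (Vinf : K -> Prop) :
  is_subring (regular_away Vinf).
Proof.
split.
- by move=> V /place_subring/subring1.
- move=> x y Ox Oy V Vp ne; have subV := place_subring Vp.
  by apply: (subringD subV); [apply: Ox | apply: Oy].
- move=> x Ox V Vp ne; have subV := place_subring Vp.
  by apply: (subringN subV); apply: Ox.
- move=> x y Ox Oy V Vp ne; have subV := place_subring Vp.
  by apply: (subringM subV); [apply: Ox | apply: Oy].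
Qed.

Lemma horner_rev (R : comNzRingType) (x y : R) (q : {poly R}) N : x * y = 1 ->
  (size q <= N.+1)%N -> x ^+ N * q.[y] = (\poly_(i < N.+1) q`_(N - i)).[x].
Proof.
move=> xy sq; rewrite horner_poly (horner_coef_wide y sq) mulr_sumr.
rewrite [RHS](reindex_inj rev_ord_inj) /=; apply: eq_bigr => i _.
have iN : (i <= N)%N by rewrite -ltnS.
rewrite subSS subKn // mulrCA; congr (_ * _).
by rewrite -{1}(subnK iN) exprD -mulrA -exprMn xy expr1n mulr1.
Qed.

Section Place.
Variables (K : fieldType) (V : K -> Prop).
Hypothesis placeV : is_place V.

Let subV := place_subring placeV.

Definition max_ideal (a : K) := V a /\ forall b, V b -> a * b != 1.

Lemma place_neq0 x : ~ V x -> x != 0.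
Proof. by apply: contra_not_neq => ->; apply: subring0 subV. Qed.

Lemma place_inv x : ~ V x -> V x^-1.
Proof. by move=> Vx; case: placeV => _ [_ [_ [_ [_ /(_ x (place_neq0 Vx))]]]] []. Qed.

Lemma max_idealM a b : max_ideal a -> V b -> max_ideal (a * b).
Proof.
case=> Va a_nonunit Vb; split=> [|c Vc]; first exact: (subringM subV Va Vb).
by rewrite -mulrA; apply: a_nonunit; apply: (subringM subV).
Qed.

Lemma max_ideal_inv y : ~ V y -> max_ideal y^-1.
Proof.
move=> Vy; have y0 := place_neq0 Vy; split=> [|b Vb]; first exact: place_inv.
by apply: contra_not_neq Vy => e; rewrite -[y]mulr1 -e mulVKf.
Qed.

Lemma max_ideal_unit1D a : max_ideal a -> 1 + a != 0 /\ V (1 + a)^-1.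
Proof.
case=> Va a_nonunit; have V1 := subring1 subV.
have a1_neq0 : 1 + a != 0.
  apply/eqP => a1; have := a_nonunit _ (subringN subV V1).
  by rewrite -[a](addKr 1) a1 addr0 mulrNN mulr1 eqxx.
split=> //; have [Vq|Vq] := classic (V (a / (1 + a))).
  have -> : (1 + a)^-1 = 1 - a / (1 + a) by field.
  exact: (subringB subV V1 Vq).
have a0 : a != 0 by apply: contra_not_neq Vq => ->; rewrite mul0r; apply: subring0 subV.
have Vai : V a^-1.
  have -> : a^-1 = (a / (1 + a))^-1 - 1 by field; rewrite a1_neq0 a0.
  exact: (subringB subV (place_inv Vq) V1).
by have := a_nonunit _ Vai; rewrite mulfV ?eqxx.
Qed.

End Place.

Section PeriodicIntegral.
Variables (K : fieldType) (V : K -> Prop) (phi : {poly K}).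
Hypotheses (placeV : is_place V) (V_phi : forall i, V phi`_i)
  (V_lead_inv : V (lead_coef phi)^-1) (size_phi : (2 < size phi)%N).

Let subV := place_subring placeV.

Let lead_neq0 : lead_coef phi != 0.
Proof. by rewrite lead_coef_eq0 -size_poly_gt0 (leq_trans _ size_phi). Qed.

Lemma horner_inv_scaled y : ~ V y -> exists2 n, max_ideal V n &
  y^-1 ^+ (size phi).-1 * phi.[y] = lead_coef phi * (1 + n).
Proof.
move=> Vy; have y0 := place_neq0 placeV Vy; set z := y^-1; set d := (size phi).-1.
have zy : z * y = 1 by rewrite mulVf.
have size_d : (size phi <= d.+1)%N by rewrite /d prednK // (leq_trans _ size_phi).
set R := \poly_(i < d.+1) phi`_(d - i).
have V_R i : V R`_i.
  by rewrite coef_poly; case: ifP => _; [apply: V_phi | apply: (subring0 subV)].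
have [D VD RD] := horner_subr_factor subV V_R (subring0 subV) (max_ideal_inv placeV Vy).1.
have R0 : R.[0] = lead_coef phi by rewrite horner_coef0 coef_poly /= subn0 lead_coefE.
exists (z * (D / lead_coef phi)).
  exact: (max_idealM placeV (max_ideal_inv placeV Vy) (subringM subV VD V_lead_inv)).
rewrite horner_rev // -[R.[z]](subrK R.[0]) RD R0 subr0 /z.
by field; rewrite lead_neq0 y0.
Qed.

Lemma horner_grows y : ~ V y -> exists2 m, max_ideal V m & y = m * phi.[y].
Proof.
move=> Vy; have [n Mn e] := horner_inv_scaled Vy.
have y0 := place_neq0 placeV Vy; set d := (size phi).-1 in e.
have [u0 Vu] := max_ideal_unit1D placeV Mn.
have py0 : phi.[y] != 0.
  by apply: contra_neq (mulf_neq0 lead_neq0 u0) => py0; rewrite -e py0 mulr0.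
have [k dk] : exists k, d = k.+2 by exists d.-2; rewrite /d; lia.
exists (y^-1 * (y^-1 ^+ k * (lead_coef phi * (1 + n))^-1)).
  apply: (max_idealM placeV (max_ideal_inv placeV Vy)); rewrite invfM.
  apply: (subringM subV (subringX subV _ (place_inv placeV Vy))).
  exact: (subringM subV V_lead_inv Vu).
rewrite -e dk !exprS; field.
by rewrite y0 py0 expf_neq0 ?invr_eq0.
Qed.

Lemma iter_grows n y : ~ V y ->
  exists2 m, max_ideal V m & y = m * iter n.+1 (fun z => phi.[z]) y.
Proof.
elim: n y => [|n IHn] y Vy; first exact: horner_grows.
have [m1 Mm1 y_eq] := horner_grows Vy.
have Vphy : ~ V phi.[y].
  by move=> Vpy; apply: Vy; rewrite y_eq; exact: (subringM subV Mm1.1 Vpy).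
have [m2 Mm2 e2] := IHn _ Vphy.
exists (m1 * m2); first exact: (max_idealM placeV Mm1 Mm2.1).
by rewrite iterSr -mulrA -e2.
Qed.

Lemma periodic_in_place x : periodic phi x -> V x.
Proof.
case=> [[|n] [// _ per]]; apply: NNPP => Vx.
have [m [_ m_nonunit] e] := iter_grows n Vx; rewrite per in e.
have m1 : m = 1 by apply: (mulIf (place_neq0 placeV Vx)); rewrite -e mul1r.
by have := m_nonunit 1 (subring1 subV); rewrite m1 mulr1 eqxx.
Qed.

End PeriodicIntegral.

Section Periodic.
Variables (K : fieldType) (phi : {poly K}).
Local Notation f := (fun z => phi.[z]).

Lemma periodic_horner x : periodic phi x -> periodic phi phi.[x].
Proof. by case=> n [n0 per]; exists n; split; rewrite // -iterSr iterS per. Qed.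

Lemma fixed_periodic x : phi.[x] = x -> periodic phi x.
Proof. by exists 1%N. Qed.

Lemma periodic_iter n x : periodic phi x -> periodic phi (iter n f x).
Proof. by move=> per_x; elim: n => //= n; apply: periodic_horner. Qed.

Lemma periodic_common_period x y : periodic phi x -> periodic phi y ->
  exists n, iter n.+1 f x = x /\ iter n.+1 f y = y.
Proof.
case=> m [m0 per_x] [n [n0 per_y]]; exists (n * m).-1.
rewrite prednK ?muln_gt0 ?m0 ?n0 //.
by split; [|rewrite mulnC]; rewrite iterM iter_fix.
Qed.

Variables (S : K -> Prop) (subS : is_subring S).
Hypotheses (S_phi : forall i, S phi`_i) (S_periodic : forall x, periodic phi x -> S x).

Lemma iter_subr_factor n x y : periodic phi x -> periodic phi y ->
  exists2 E, S E & iter n f y - iter n f x = (y - x) * E.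
Proof.
move=> per_x per_y; elim: n => [|n [E SE IHn]].
  by exists 1; [apply: (subring1 subS) | rewrite mulr1].
rewrite !iterS; have [D SD ->] := horner_subr_factor subS S_phi
  (S_periodic (periodic_iter n per_x)) (S_periodic (periodic_iter n per_y)).
by exists (E * D); [apply: (subringM subS) | rewrite IHn mulrA].
Qed.

Lemma multiplier_unit x y : periodic phi x -> periodic phi y -> x != y ->
  let u := (phi.[y] - phi.[x]) / (y - x) in [/\ u != 0, S u & S u^-1].
Proof.
move=> per_x per_y xy u; have yx0 : y - x != 0 by rewrite subr_eq0 eq_sym.
have [D SD phiD] := horner_subr_factor subS S_phi (S_periodic per_x) (S_periodic per_y).
have uD : u = D by rewrite /u phiD mulrC mulKf.
have [n [px py]] := periodic_common_period per_x per_y.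
have [E SE] := iter_subr_factor n (periodic_horner per_x) (periodic_horner per_y).
rewrite -!iterSr px py phiD -mulrA -{1}[y - x]mulr1 => /(mulfI yx0) DE.
have D0 : D != 0 by apply: contra_eq_neq DE => ->; rewrite mul0r oner_neq0.
have -> : u^-1 = E by rewrite uD -[D^-1]mulr1 DE mulKf.
by rewrite uD.
Qed.

End Periodic.

Section Chevalley.
Local Open Scope classical_set_scope.
Variables (F K : fieldType) (f : {rmorphism F -> K}) (z : K).
Hypothesis z_nonunit : forall q : {poly F}, z * (map_poly f q).[z] != 1.

Definition Fz : set K := [set y | exists q : {poly F}, y = (map_poly f q).[z]].

Definition admissible (A : set K) :=
  [/\ is_subring A, Fz `<=` A & forall a, A a -> z * a != 1].

Definition adjoin (A : set K) (x : K) : set K :=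
  [set y | exists2 p : {poly K}, (forall i, A p`_i) & y = p.[x]].

Lemma Fz_subring : is_subring Fz.
Proof.
split.
- by exists 1; rewrite rmorph1 hornerE.
- by move=> _ _ [p ->] [q ->]; exists (p + q); rewrite rmorphD hornerD.
- by move=> _ [p ->]; exists (- p); rewrite rmorphN hornerN.
- by move=> _ _ [p ->] [q ->]; exists (p * q); rewrite rmorphM hornerM.
Qed.

Lemma admissible_Fz : admissible Fz.
Proof. by split=> // [|_ [q ->]]; [exact: Fz_subring | exact: z_nonunit]. Qed.

Section Adjoin.
Variables (A : set K) (subA : is_subring A).

Lemma adjoin_subring x : is_subring (adjoin A x).
Proof.
split.
- exists 1 => [i|]; last by rewrite hornerE.
  by rewrite coef1; case: eqP => _; [apply: (subring1 subA) | apply: (subring0 subA)].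
- move=> _ _ [p Ap ->] [q Aq ->]; exists (p + q) => [i|]; last by rewrite hornerD.
  by rewrite coefD; apply: (subringD subA).
- move=> _ [p Ap ->]; exists (- p) => [i|]; last by rewrite hornerN.
  by rewrite coefN; apply: (subringN subA).
- move=> _ _ [p Ap ->] [q Aq ->]; exists (p * q) => [i|]; last by rewrite hornerM.
  by rewrite coefM; apply: (subring_sum subA) => j _; apply: (subringM subA).
Qed.

Lemma adjoin_sub x : A `<=` adjoin A x.
Proof.
move=> a Aa; exists a%:P => [i|]; last by rewrite hornerC.
by rewrite coefC; case: eqP => _; [apply: Aa | apply: (subring0 subA)].
Qed.

Lemma adjoin_mem x : adjoin A x x.
Proof.
exists 'X => [i|]; last by rewrite hornerX.
by rewrite coefX; case: eqP => _; [apply: (subring1 subA) | apply: (subring0 subA)].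
Qed.

End Adjoin.

Section Maximal.
Variable A : set K.
Hypotheses (admA : admissible A)
  (maxA : forall B, admissible B -> A `<=` B -> B `<=` A).

Let subA : is_subring A. Proof. by case: admA. Qed.
Let A_nonunit a : A a -> z * a != 1. Proof. by case: admA => _ _; apply. Qed.

Lemma maximal_z : A z.
Proof. by case: admA => _ + _; apply; exists 'X; rewrite map_polyX hornerX. Qed.

Lemma maximal_adjoin x :
  A x \/ exists2 p : {poly K}, (forall i, A p`_i) & z * p.[x] = 1.
Proof.
have [|Ax] := classic (A x); [by left | right; apply: NNPP => no_p; apply: Ax].
apply: (maxA _ (adjoin_sub subA x) (adjoin_mem subA x)); split.
- exact: adjoin_subring.
- by case: admA => _ FzA _ y /FzA; apply: adjoin_sub.
- by move=> _ [p Ap ->]; apply/eqP => zp; apply: no_p; exists p.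
Qed.

Lemma maximal_unit1B a : A a -> A (1 - z * a)^-1.
Proof.
move=> Aa; have Aza := subringM subA maximal_z Aa.
have s0 : 1 - z * a != 0 by rewrite subr_eq0 eq_sym; apply: A_nonunit.
have [//|[p Ap zp]] := maximal_adjoin (1 - z * a)^-1; exfalso.
set s := 1 - z * a in s0 Aza zp *; set N := size p.
have sN1 : s ^+ N = 1 - z * (a * \sum_(i < N) s ^+ i).
  by rewrite -[s ^+ N](subrK 1) subrX1 /s; ring.
have := horner_rev (mulfV s0) (leqnSn N).
set Q := \poly_(i < N.+1) p`_(N - i) => sQ.
have AQ : A Q.[s].
  apply: (subring_horner subA); last exact: (subringB subA (subring1 subA) Aza).
  by move=> i; rewrite coef_poly; case: ifP => _; [apply: Ap | apply: (subring0 subA)].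
have Ac : A (a * \sum_(i < N) s ^+ i).
  apply: (subringM subA Aa); apply: (subring_sum subA) => i _.
  exact: (subringX subA _ (subringB subA (subring1 subA) Aza)).
have /eqP := A_nonunit (subringD subA AQ Ac); apply.
by rewrite mulrDr -sQ mulrCA zp mulr1 sN1 subrK.
Qed.

Definition z_inv_deg x n := exists p : {poly K},
  [/\ forall i, A p`_i, (size p <= n.+1)%N & z * p.[x] = 1].

Lemma z_inv_deg0 x : ~ z_inv_deg x 0.
Proof.
by case=> p [Ap /size1_polyC-> zp]; apply/eqP: zp; rewrite hornerC; apply: A_nonunit.
Qed.

Lemma z_inv_deg_pow x y m : x * y = 1 -> z_inv_deg y m ->
  exists Q : {poly K}, [/\ forall i, A Q`_i, (size Q <= m)%N & x ^+ m = z * Q.[x]].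
Proof.
move=> xy [q [Aq size_q zq]]; set s := 1 - z * q`_0.
have s0 : s != 0 by rewrite subr_eq0 eq_sym; apply: A_nonunit.
set Q := \poly_(i < m) q`_(m - i).
have xmq : x ^+ m * q.[y] = Q.[x] + q`_0 * x ^+ m.
  by rewrite horner_rev // /Q !horner_poly big_ord_recr /= subnn.
have xm : x ^+ m * s = z * Q.[x].
  have xmQ : x ^+ m = z * (Q.[x] + q`_0 * x ^+ m) by rewrite -xmq mulrCA zq mulr1.
  by rewrite /s mulrBr mulr1 {1}xmQ; ring.
exists (s^-1 *: Q); split.
- move=> i; rewrite coefZ coef_poly; apply: (subringM subA (maximal_unit1B (Aq 0))).
  by case: ifP => _; [apply: Aq | apply: (subring0 subA)].
- exact: leq_trans (size_scale_leq _ _) (size_poly _ _).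
by apply: (mulIf s0); rewrite xm hornerZ; field.
Qed.

Lemma z_inv_deg_reduce x y n m : x * y = 1 -> (m <= n.+1)%N ->
  z_inv_deg x n.+1 -> z_inv_deg y m -> z_inv_deg x n.
Proof.
move=> xy mn [p [Ap size_p zp]] /(z_inv_deg_pow xy) [Q [AQ size_Q xmQ]].
set c := p`_n.+1; set r := take_poly n.+1 p.
have p_split : p = r + c *: 'X^(n.+1).
  have size_d : (size (drop_poly n.+1 p) <= 1)%N by rewrite size_drop_poly; lia.
  by rewrite -{1}(poly_take_drop n.+1 p) (size1_polyC size_d) coef_drop_poly mul_polyC.
(* Trade the leading term c x^(n+1) of p(x) for c z x^(n+1-m) Q(x). *)
exists (r + (c * z) *: ('X^(n.+1 - m) * Q)); split.
- move=> i; rewrite coefD coef_take_poly coefZ coefXnM; apply: (subringD subA).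
    by case: ifP => _; [apply: Ap | apply: (subring0 subA)].
  apply: (subringM subA (subringM subA (Ap _) maximal_z)).
  by case: ifP => _; [apply: (subring0 subA) | apply: AQ].
- rewrite (leq_trans (size_polyD _ _)) // geq_max size_take_poly.
  rewrite (leq_trans (size_scale_leq _ _)) // (leq_trans (size_polyMleq _ _)) //.
  by rewrite size_polyXn; lia.
- rewrite -zp [in RHS]p_split; congr (z * _).
  rewrite !(hornerD, hornerZ, hornerM, hornerXn) -{2}(subnK mn) exprD xmQ; ring.
Qed.

Lemma z_inv_deg_inv k n m x y : x * y = 1 -> (n + m <= k)%N ->
  z_inv_deg x n -> z_inv_deg y m -> False.
Proof.
elim: k n m x y => [|k IHk] [|n] [|m] x y xy nmk px qy //;
  try by [case: (z_inv_deg0 px) | case: (z_inv_deg0 qy)].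
have [mn|nm] := leqP m.+1 n.+1.
  exact: (IHk n m.+1 x y xy nmk (z_inv_deg_reduce xy mn px qy) qy).
have yx : y * x = 1 by rewrite mulrC.
apply: (IHk n.+1 m x y xy _ px (z_inv_deg_reduce yx (ltnW nm) qy px)).
by rewrite addSnnS.
Qed.

Lemma maximal_valuation x : x != 0 -> A x \/ A x^-1.
Proof.
move=> x0; have [|[p Ap zp]] := maximal_adjoin x; [by left | right].
have [//|[q Aq zq]] := maximal_adjoin x^-1; exfalso.
apply: (@z_inv_deg_inv (size p + size q) (size p) (size q) x x^-1) => //.
- by rewrite mulfV.
- by exists p.
- by exists q.
Qed.

End Maximal.

Lemma admissible_bigcup (FF : set (set K)) :
  (forall X, FF X -> X !=set0 -> admissible X) -> total_on FF subset ->
  \bigcup_(X in FF) X !=set0 -> admissible (\bigcup_(X in FF) X).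
Proof.
move=> admFF chainFF [y0 [X0 FX0 X0y0]].
have admX X a : FF X -> X a -> admissible X by move=> FX Xa; apply: admFF => //; exists a.
have subX X a : FF X -> X a -> is_subring X by move=> FX /(admX _ _ FX) [].
have common a b : (\bigcup_(X in FF) X) a -> (\bigcup_(X in FF) X) b ->
    exists X, [/\ FF X, X a & X b].
  move=> [Xa FXa Xaa] [Xb FXb Xbb]; have [ab|ba] := chainFF _ _ FXa FXb.
    by exists Xb; split=> //; apply: ab.
  by exists Xa; split=> //; apply: ba.
split; [split | |].
- by exists X0 => //; apply: (subring1 (subX _ _ FX0 X0y0)).
- move=> a b Ua Ub; have [X [FX Xa Xb]] := common a b Ua Ub.
  by exists X => //; apply: (subringD (subX _ _ FX Xa)).
- by move=> a [X FX Xa]; exists X => //; apply: (subringN (subX _ _ FX Xa)).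
- move=> a b Ua Ub; have [X [FX Xa Xb]] := common a b Ua Ub.
  by exists X => //; apply: (subringM (subX _ _ FX Xa)).
- by move=> y Fzy; exists X0 => //; have [_ + _] := admX _ _ FX0 X0y0; apply.
- by move=> a [X FX Xa]; have [_ _] := admX _ _ FX Xa; apply.
Qed.

Lemma exists_maximal_admissible : exists2 A, admissible A &
  forall B, admissible B -> A `<=` B -> B `<=` A.
Proof.
(* The guard makes the empty chain, whose union is set0, acceptable to Zorn. *)
have [A [admA maxA]] := @Zorn_bigcup K (fun A => A !=set0 -> admissible A)
  (fun FF FFP chainFF => admissible_bigcup FFP chainFF).
have A_ne : A !=set0.
  apply: NNPP => A0; apply: (maxA Fz); last by move=> _; apply: admissible_Fz.
  split=> [a Aa|FzA]; first by case: A0; exists a.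
  by apply: A0; exists 1; apply: FzA; exists 1; rewrite rmorph1 hornerE.
exists A => [|B admB AB]; first exact: admA.
by apply: NNPP => BA; apply: (maxA B).
Qed.

Theorem Chevalley_place : z != 0 -> exists V : set K, [/\ is_place V, V z & ~ V z^-1].
Proof.
move=> z0; have [A admA maxA] := exists_maximal_admissible.
have [[A1 AD AN AM] _ A_nonunit] := admA.
have Azi : ~ A z^-1 by move/A_nonunit; rewrite mulfV ?eqxx.
exists A; split=> //; last exact: maximal_z admA.
by do !split=> //; [exists z^-1 | apply: maximal_valuation maxA].
Qed.

End Chevalley.

Section Constants.
Variables (K : fieldType) (p : nat) (pK : p \in [pchar K]).
Definition Fp_to_K : {rmorphism 'F_p -> pPrimeCharType pK} := in_alg _.

Lemma algebraicOver_prime (u : K) : algebraicOver Fp_to_K u -> algebraic_over_prime u.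
Proof.
case=> q q0 qu; exists (map_poly Fp_to_K q); split=> [i||//]; last by rewrite map_poly_eq0.
by exists (nat_of_ord q`_i); rewrite coef_map; apply: mulr1.
Qed.

Lemma transcendental_nonunit (w : K) : ~ algebraicOver Fp_to_K w ->
  forall q : {poly 'F_p}, w * (map_poly Fp_to_K q).[w] != 1.
Proof.
move=> w_tr q; apply/eqP => wq; apply: w_tr; exists ('X * q - 1).
  by apply/eqP => /(congr1 (horner^~ 0)); rewrite !hornerE => /eqP; rewrite oppr_eq0 oner_eq0.
by apply/rootP; rewrite rmorphB rmorphM /= map_polyX rmorph1 !hornerE wq subrr.
Qed.

Lemma regular_away_unit_algebraic (Vinf : K -> Prop) (u : K) : u != 0 ->
  regular_away Vinf u -> regular_away Vinf u^-1 -> algebraicOver Fp_to_K u.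
Proof.
move=> u0 Ou Oui; apply: NNPP => u_tr.
have ui_tr : ~ algebraicOver Fp_to_K u^-1 by move/algebraic_inv; rewrite invrK.
have [V1 [placeV1 _ V1ui]] := Chevalley_place (transcendental_nonunit u_tr) u0.
have [V2 [placeV2 V2ui]] := Chevalley_place (transcendental_nonunit ui_tr) (invr_neq0 u0).
rewrite invrK => V2u.
have [V1inf|V1inf] := classic (forall y, V1 y <-> Vinf y); last first.
  exact: V1ui (Oui _ placeV1 V1inf).
apply: V2u (Ou _ placeV2 _) => V2inf; apply: V1ui; apply/V1inf/V2inf/V2ui.
Qed.

End Constants.

Section Rigidity.
Variables (K : fieldType) (phi : {poly K}) (C : K -> Prop).
Hypotheses (C1 : C 1) (CB : forall x y, C x -> C y -> C (x - y))
  (CV : forall x y, C x -> C y -> C (x / y)).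
Hypothesis C_multiplier : forall x y, periodic phi x -> periodic phi y -> x != y ->
  C ((phi.[y] - phi.[x]) / (y - x)).

Let C0 : C 0. Proof. by rewrite -(subrr 1); apply: CB. Qed.

Lemma fixed_ratio_const a e x : phi.[a] = a -> phi.[e] = e -> e != a ->
  periodic phi x -> phi.[x] != x -> C ((x - a) / (e - a)).
Proof.
move=> fa fe ea per_x fx.
have [ax ex] : a != x /\ e != x by split; apply: contra_neq fx => <-.
have [xa xe] : x - a != 0 /\ x - e != 0 by rewrite !subr_eq0 !(eq_sym x).
have ea0 : e - a != 0 by rewrite subr_eq0.
have := C_multiplier (fixed_periodic fa) per_x ax; rewrite fa.
have := C_multiplier (fixed_periodic fe) per_x ex; rewrite fe.
set u := (phi.[x] - a) / (x - a); set w := (phi.[x] - e) / (x - e) => Cw Cu.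
have w1 : w - 1 = (phi.[x] - x) / (x - e) by rewrite /w; field.
have wu : (w - u) * (x - a) = (w - 1) * (e - a) by rewrite /u /w; field; rewrite xa xe.
have wu0 : w - u != 0.
  have px0 : phi.[x] - x != 0 by rewrite subr_eq0.
  apply: contraTneq (mulf_neq0 (mulf_neq0 px0 (invr_neq0 xe)) ea0).
  by rewrite -w1 -wu => ->; rewrite mul0r eqxx.
have -> : (x - a) / (e - a) = (w - 1) / (w - u).
  by rewrite -[x - a](mulKf wu0) wu; field; rewrite wu0 ea0.
exact: CV (CB Cw C1) (CB Cw Cu).
Qed.

Lemma periodic_ratio_const a b c x : phi.[a] = a -> phi.[b] = b -> b != a ->
  periodic phi c -> phi.[c] != c -> periodic phi x -> C ((x - a) / (b - a)).
Proof.
move=> fa fb ba per_c fc per_x.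
have [fx|fx] := eqVneq phi.[x] x; last exact: fixed_ratio_const fx.
have [->|xa] := eqVneq x a; first by rewrite subrr mul0r; apply: C0.
have ca : c - a != 0 by rewrite subr_eq0; apply: contra_neq fc => ->.
have -> : (x - a) / (b - a) = ((c - a) / (b - a)) / ((c - a) / (x - a)).
  by field; rewrite ca !subr_eq0 ba xa.
by apply: CV; apply: fixed_ratio_const.
Qed.

Lemma periodic_diff_ratio_const a b c x y x' y' :
  phi.[a] = a -> phi.[b] = b -> b != a -> periodic phi c -> phi.[c] != c ->
  periodic phi x -> periodic phi y -> periodic phi x' -> periodic phi y' -> x' != y' ->
  C ((y - x) / (y' - x')).
Proof.
move=> fa fb ba per_c fc per_x per_y per_x' per_y' x'y'.
pose r t := (t - a) / (b - a).
have -> : (y - x) / (y' - x') = (r y - r x) / (r y' - r x').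
  rewrite /r; field.
  by rewrite subr_eq0 ba opprB addrA subrK subr_eq0 eq_sym.
by apply: CV; apply: CB; apply: periodic_ratio_const per_c fc _.
Qed.

End Rigidity.

Theorem lemma2p10 (K : fieldType) (Vinf : K -> Prop) (phi : {poly K}) :
  global_function_field K ->
  is_place Vinf ->
  (forall i : nat, regular_away Vinf phi`_i) ->
  (2 < size phi)%N ->
  regular_away_unit Vinf (lead_coef phi) ->
  (exists x1 x2 : K, [/\ x1 != x2, phi.[x1] = x1 & phi.[x2] = x2]) ->
  (exists x : K, periodic phi x /\ phi.[x] != x) ->
  (forall x : K, periodic phi x -> periodic phi phi.[x]) /\
  (forall x y x' y' : K,
     periodic phi x -> periodic phi y -> x != y ->
     periodic phi x' -> periodic phi y' -> x' != y' ->
     exists u : K, const_unit u /\ y - x = u * (y' - x')).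
Proof.
move=> [[p pK] _] _ O_phi size_phi [_ [_ O_lead_inv]] [a [b [ab fa fb]]] [c [per_c fc]].
split=> [x|x y x' y' per_x per_y xy per_x' per_y' x'y']; first exact: periodic_horner.
have O_periodic z : periodic phi z -> regular_away Vinf z.
  move=> per_z V placeV ne; apply: (periodic_in_place placeV _ _ size_phi per_z).
    by move=> i; apply: O_phi.
  exact: O_lead_inv.
have alg_multiplier z t : periodic phi z -> periodic phi t -> z != t ->
    algebraicOver (Fp_to_K pK) ((phi.[t] - phi.[z]) / (t - z)).
  move=> per_z per_t zt.
  have [u0 Ou Oui] :=
    multiplier_unit (regular_away_subring Vinf) O_phi O_periodic per_z per_t zt.
  exact: regular_away_unit_algebraic u0 Ou Oui.
have x'y'0 : y' - x' != 0 by rewrite subr_eq0 eq_sym.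
exists ((y - x) / (y' - x')); split; last by rewrite divfK.
split; first by rewrite mulf_neq0 ?invr_eq0 // subr_eq0 eq_sym.
have ba : b != a by rewrite eq_sym.
apply: (algebraicOver_prime (pK := pK)).
exact: (periodic_diff_ratio_const (C := algebraicOver (Fp_to_K pK)) (algebraic1 _)
  (@algebraic_sub _ _ _) (@algebraic_div _ _ _) alg_multiplier
  fa fb ba per_c fc per_x per_y per_x' per_y' x'y').
Qed.
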